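(* Let $PS = D \cup LP \cup MP \cup IC$ be a minimal P2P system such that no negation occurs in $LP$. Then the relation $\sqsupseteq_{Min}$ is a partial order on the set of weak models of $PS$.
   Context: Peer atoms: a peer identifier is a positive integer; a peer atom is $i\!:\!p(t_1,\dots,t_k)$ with $i$ a peer identifier, $p$ a predicate and $t_j$ terms; $i\!:\!p$ is a peer predicate. A literal is an atom $A$ or its negation-as-failure $not\ A$. Built-in atoms are $X\,\theta\,Y$ with $\theta\in\{<,>,\le,\ge,=,\neq\}$. Rules (all safe): a standard rule $H\leftarrow \mathcal B$; an integrity constraint $\leftarrow \mathcal B$; a maximal mapping rule $i\!:\!h(X) \leftharpoonup j\!:\!(p_1(X_1),\dots,p_m(X_m),\varphi)$ with $i\neq j$; a minimal mapping rule, identical but with $\leftharpoondown$. A peer $P_i=\langle D_i,LP_i,MP_i,IC_i\rangle$ consists of a finite set $D_i$ of ground atoms with identifier $i$, a finite set $LP_i$ of standard rules all of whose atoms have identifier $i$, a finite set $MP_i$ of mapping rules with head identifier $i$, and a finite set $IC_i$ of integrity constraints over atoms with identifier $i$. A P2P system is a set $PS=\{P_1,\dots,P_n\}$ of peers in which every source identifier of a mapping rule lies in $[1..n]$; $D,LP,MP,IC$ are the unions of the components, and $PS$ is identified with $D\cup LP\cup MP\cup IC$. A minimal P2P system is one all of whose mapping rules are minimal. A predicate is derived if it heads a standard rule, a mapping predicate if it heads a mapping rule, base otherwise; each predicate has exactly one type and each mapping predicate heads exactly one mapping rule. Semantics: interpretation = set of ground peer atoms; $A$ true iff $A\in M$,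 $not\ A$ true iff $A\notin M$; a standard rule is satisfied iff its body is false or its head true; a constraint iff its body is false. $MM(\Pi)$ = inclusion-minimal models. $St(r)$ turns a mapping rule with head $H$, body $\mathcal B$ into $H\leftarrow\mathcal B$. $M$ is a weak model of $PS$ if $\{M\}=MM(St(PS^M))$, where $PS^M$ is obtained from $ground(PS)$ by removing every rule whose body contains $not\ A$ with $A\in M$, deleting negative literals from the remaining rules, and removing every ground mapping rule whose head is not in $M$. $M[MP]$ = atoms of $M$ with a mapping predicate. For weak models $M,N$: $M\sqsupseteq_{Min}N$ iff $M[MP]\subseteq N[MP]$. *)

From Stdlib Require Import List Arith.
Import ListNotations.

Definition peer_id := nat.     (* peer identifiers; peers are numbered 1..n *)
Definition pred_name := nat.
Definition const := nat.
Definition var := nat.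

Inductive term := TVar (x : var) | TConst (c : const).

Record atom := mkAtom { a_peer : peer_id; a_pred : pred_name; a_args : list term }.
Record gatom := mkGAtom { g_peer : peer_id; g_pred : pred_name; g_args : list const }.

Inductive cmp := CLt | CGt | CLe | CGe | CEq | CNeq.
Record builtin := mkBuiltin { b_op : cmp; b_lhs : term; b_rhs : term }.

Inductive literal := LPos (A : atom) | LNeg (A : atom) | LBuiltin (b : builtin).

Record std_rule := mkStd { sr_head : atom; sr_body : list literal }.
Record constraint := mkIC { ic_body : list literal }.

Inductive map_kind := MaxMap | MinMap.
(* mapping rule  i:h(X) <-(max/min) j:(p_1(X_1),...,p_m(X_m), phi) ;
   mr_src = j, mr_body = [(p_1,X_1);...;(p_m,X_m)], mr_cond = phi *)
Record map_rule := mkMap {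
  mr_kind : map_kind; mr_head : atom; mr_src : peer_id;
  mr_body : list (pred_name * list term); mr_cond : list builtin }.

Record peer := mkPeer {
  p_D : list gatom; p_LP : list std_rule; p_MP : list map_rule; p_IC : list constraint }.

(* a P2P system {P_1,...,P_n}: the peer with identifier i is the i-th element *)
Definition p2p := list peer.

Definition peer_at (PS : p2p) (i : peer_id) (P : peer) : Prop :=
  1 <= i /\ nth_error PS (i - 1) = Some P.

Definition map_body_atoms (r : map_rule) : list atom :=
  map (fun pt => mkAtom (mr_src r) (fst pt) (snd pt)) (mr_body r).

Definition term_vars (t : term) : list var :=
  match t with TVar x => [x] | TConst _ => [] end.
Definition atom_vars (A : atom) : list var := flat_map term_vars (a_args A).
Definition builtin_vars (b : builtin) : list var :=
  term_vars (b_lhs b) ++ term_vars (b_rhs b).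
Definition lit_vars (l : literal) : list var :=
  match l with LPos A | LNeg A => atom_vars A | LBuiltin b => builtin_vars b end.
Definition pos_lit_vars (l : literal) : list var :=
  match l with LPos A => atom_vars A | _ => [] end.

Definition safe_std (r : std_rule) : Prop :=
  forall x, In x (atom_vars (sr_head r) ++ flat_map lit_vars (sr_body r)) ->
            In x (flat_map pos_lit_vars (sr_body r)).
Definition safe_ic (c : constraint) : Prop :=
  forall x, In x (flat_map lit_vars (ic_body c)) ->
            In x (flat_map pos_lit_vars (ic_body c)).
Definition safe_map (r : map_rule) : Prop :=
  forall x, In x (atom_vars (mr_head r) ++ flat_map builtin_vars (mr_cond r)) ->
            In x (flat_map atom_vars (map_body_atoms r)).

Definition lit_has_id (i : peer_id) (l : literal) : Prop :=
  match l with LPos A | LNeg A => a_peer A = i | LBuiltin _ => True end.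

Definition is_derived_pred (PS : p2p) (i : peer_id) (p : pred_name) : Prop :=
  exists k P r, peer_at PS k P /\ In r (p_LP P) /\
                a_peer (sr_head r) = i /\ a_pred (sr_head r) = p.
Definition is_mapping_pred (PS : p2p) (i : peer_id) (p : pred_name) : Prop :=
  exists k P r, peer_at PS k P /\ In r (p_MP P) /\
                a_peer (mr_head r) = i /\ a_pred (mr_head r) = p.

Definition p2p_system (PS : p2p) : Prop :=
  (forall i P, peer_at PS i P ->
     (forall g, In g (p_D P) -> g_peer g = i) /\
     (forall r, In r (p_LP P) ->
        a_peer (sr_head r) = i /\ Forall (lit_has_id i) (sr_body r) /\ safe_std r) /\
     (forall r, In r (p_MP P) ->
        a_peer (mr_head r) = i /\ mr_src r <> i /\
        1 <= mr_src r <= length PS /\ safe_map r) /\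
     (forall c, In c (p_IC P) ->
        Forall (lit_has_id i) (ic_body c) /\ safe_ic c)) /\
  (forall i p, ~ (is_derived_pred PS i p /\ is_mapping_pred PS i p)) /\
  (forall k P r k' P' r', peer_at PS k P -> In r (p_MP P) ->
     peer_at PS k' P' -> In r' (p_MP P') ->
     a_peer (mr_head r) = a_peer (mr_head r') ->
     a_pred (mr_head r) = a_pred (mr_head r') -> r = r').

Definition minimal_p2p_system (PS : p2p) : Prop :=
  p2p_system PS /\
  forall k P r, peer_at PS k P -> In r (p_MP P) -> mr_kind r = MinMap.

Definition LP_negation_free (PS : p2p) : Prop :=
  forall k P r, peer_at PS k P -> In r (p_LP P) ->
    forall A, ~ In (LNeg A) (sr_body r).

Definition interp := gatom -> Prop.
Definition subst := var -> const.

Definition inst_term (s : subst) (t : term) : const :=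
  match t with TVar x => s x | TConst c => c end.
Definition inst_atom (s : subst) (A : atom) : gatom :=
  mkGAtom (a_peer A) (a_pred A) (map (inst_term s) (a_args A)).
Definition inst_builtin (s : subst) (b : builtin) : cmp * const * const :=
  (b_op b, inst_term s (b_lhs b), inst_term s (b_rhs b)).

Definition eval_cmp (op : cmp) (m n : const) : Prop :=
  match op with
  | CLt => m < n | CGt => m > n | CLe => m <= n | CGe => m >= n
  | CEq => m = n | CNeq => m <> n end.

Inductive origin := FromStd | FromMap.

(* ground rule: head (None for a constraint), positive body, negative body,
   ground built-in atoms; origin records whether it is a mapping rule *)
Record ground_rule := mkGR {
  gr_origin : origin; gr_head : option gatom;
  gr_pos : list gatom; gr_neg : list gatom; gr_bi : list (cmp * const * const) }.

Definition inst_pos (s : subst) (B : list literal) : list gatom :=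
  flat_map (fun l => match l with LPos A => [inst_atom s A] | _ => [] end) B.
Definition inst_neg (s : subst) (B : list literal) : list gatom :=
  flat_map (fun l => match l with LNeg A => [inst_atom s A] | _ => [] end) B.
Definition inst_bi (s : subst) (B : list literal) : list (cmp * const * const) :=
  flat_map (fun l => match l with LBuiltin b => [inst_builtin s b] | _ => [] end) B.

Definition inst_std (s : subst) (r : std_rule) : ground_rule :=
  mkGR FromStd (Some (inst_atom s (sr_head r)))
       (inst_pos s (sr_body r)) (inst_neg s (sr_body r)) (inst_bi s (sr_body r)).
Definition inst_ic (s : subst) (c : constraint) : ground_rule :=
  mkGR FromStd None
       (inst_pos s (ic_body c)) (inst_neg s (ic_body c)) (inst_bi s (ic_body c)).
Definition inst_map (s : subst) (r : map_rule) : ground_rule :=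
  mkGR FromMap (Some (inst_atom s (mr_head r)))
       (map (inst_atom s) (map_body_atoms r)) [] (map (inst_builtin s) (mr_cond r)).

(* ground(PS), with PS identified with D u LP u MP u IC (facts = bodiless rules) *)
Definition ground (PS : p2p) (g : ground_rule) : Prop :=
  exists k P, peer_at PS k P /\
   ((exists a, In a (p_D P) /\ g = mkGR FromStd (Some a) [] [] []) \/
    (exists r s, In r (p_LP P) /\ g = inst_std s r) \/
    (exists r s, In r (p_MP P) /\ g = inst_map s r) \/
    (exists c s, In c (p_IC P) /\ g = inst_ic s c)).

(* St(PS^M): reduct of ground(PS) w.r.t. M, with mapping rules made standard *)
Definition reduct_St (PS : p2p) (M : interp) (g' : ground_rule) : Prop :=
  exists g, ground PS g /\
    (forall A, In A (gr_neg g) -> ~ M A) /\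
    (gr_origin g = FromMap -> exists h, gr_head g = Some h /\ M h) /\
    g' = mkGR FromStd (gr_head g) (gr_pos g) [] (gr_bi g).

Definition body_true (M : interp) (g : ground_rule) : Prop :=
  (forall a, In a (gr_pos g) -> M a) /\
  (forall a, In a (gr_neg g) -> ~ M a) /\
  (forall b, In b (gr_bi g) -> let '(op, m, n) := b in eval_cmp op m n).

Definition satisfies (M : interp) (g : ground_rule) : Prop :=
  body_true M g -> match gr_head g with Some h => M h | None => False end.

Definition is_model (Pi : ground_rule -> Prop) (M : interp) : Prop :=
  forall g, Pi g -> satisfies M g.

Definition minimal_model (Pi : ground_rule -> Prop) (M : interp) : Prop :=
  is_model Pi M /\
  forall N, is_model Pi N -> (forall a, N a -> M a) -> forall a, M a -> N a.

(* M is a weak model iff {M} = MM(St(PS^M)) (sets compared extensionally) *)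
Definition weak_model (PS : p2p) (M : interp) : Prop :=
  minimal_model (reduct_St PS M) M /\
  forall N, minimal_model (reduct_St PS M) N -> forall a, N a <-> M a.

(* M sqsupseteq_Min N  iff  M[MP] subset N[MP] *)
Definition min_pref (PS : p2p) (M N : interp) : Prop :=
  forall a, M a -> is_mapping_pred PS (g_peer a) (g_pred a) ->
            N a /\ is_mapping_pred PS (g_peer a) (g_pred a).

Definition partial_order_on {T : Type} (S : T -> Prop) (R : T -> T -> Prop) : Prop :=
  (forall x, S x -> R x x) /\
  (forall x y z, S x -> S y -> S z -> R x y -> R y z -> R x z) /\
  (forall x y, S x -> S y -> R x y -> R y x -> x = y).

(* Reflexivity and transitivity of [min_pref] are immediate; the content is
   antisymmetry. Let M and N be weak models with M[MP] included in N. Without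
   negation in LP, every headed rule of St(PS^M) is also a rule of St(PS^N):
   only mapping rules are filtered by the reduct, and their heads are mapping
   atoms of M, hence atoms of N. So M and N both satisfy St(PS^M), and since
   the reduct has no negative literals so does their intersection; minimality
   of M forces M to be included in N. *)
From Stdlib Require Import List FunctionalExtensionality PropExtensionality.
Import ListNotations.

Lemma inst_neg_nil s B : (forall A, ~ In (LNeg A) B) -> inst_neg s B = [].
Proof.
  induction B as [|[A|A|b] B IH]; intros Hneg; simpl; try reflexivity.
  - apply IH. intros A' HA'. apply (Hneg A'). now right.
  - exfalso. apply (Hneg A). now left.
  - apply IH. intros A' HA'. apply (Hneg A'). now right.
Qed.

(* Constraints may carry negation; only headed ground rules lose it. *)
Lemma ground_headed_neg_nil PS g :
  LP_negation_free PS -> ground PS g -> gr_head g <> None -> gr_neg g = [].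
Proof.
  intros Hfree [k [P [HP Hg]]] Hhead.
  destruct Hg as [[a [_ ->]] | [[r [s [Hr ->]]] | [[r [s [Hr ->]]] | [c [s [Hc ->]]]]]];
    simpl in *; try reflexivity.
  - exact (inst_neg_nil s _ (Hfree k P r HP Hr)).
  - congruence.
Qed.

Lemma ground_map_head_mapping_pred PS g :
  ground PS g -> gr_origin g = FromMap ->
  exists h, gr_head g = Some h /\ is_mapping_pred PS (g_peer h) (g_pred h).
Proof.
  intros [k [P [HP Hg]]] Horig.
  destruct Hg as [[a [_ ->]] | [[r [s [Hr ->]]] | [[r [s [Hr ->]]] | [c [s [Hc ->]]]]]];
    simpl in *; try discriminate.
  eexists; split; [reflexivity|]. now exists k, P, r.
Qed.

Lemma reduct_St_neg_nil PS M g : reduct_St PS M g -> gr_neg g = [].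
Proof. now intros [g0 [_ [_ [_ ->]]]]. Qed.

Lemma body_true_mono (M N : interp) g :
  gr_neg g = [] -> (forall a, M a -> N a) -> body_true M g -> body_true N g.
Proof.
  intros Hneg HMN [Hpos [_ Hbi]]. unfold body_true. rewrite Hneg.
  split; [|split]; [intros a Ha; exact (HMN a (Hpos a Ha)) | intros a [] | exact Hbi].
Qed.

Lemma reduct_St_min_pref PS M N g :
  LP_negation_free PS -> min_pref PS M N ->
  reduct_St PS M g -> gr_head g <> None -> reduct_St PS N g.
Proof.
  intros Hfree Hpref [g0 [Hg0 [_ [Horig ->]]]] Hhead. simpl in Hhead.
  exists g0. split; [exact Hg0|]. split; [|split; [|reflexivity]].
  - rewrite (ground_headed_neg_nil PS g0 Hfree Hg0 Hhead). intros A [].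
  - intros Hmap.
    destruct (ground_map_head_mapping_pred PS g0 Hg0 Hmap) as [h [Eh Hmp]].
    destruct (Horig Hmap) as [h' [Eh' Mh]].
    rewrite Eh in Eh'. injection Eh' as <-.
    exists h. split; [exact Eh|]. exact (proj1 (Hpref h Mh Hmp)).
Qed.

Lemma weak_model_min_pref_incl PS M N :
  LP_negation_free PS -> weak_model PS M -> weak_model PS N ->
  min_pref PS M N -> forall a, M a -> N a.
Proof.
  intros Hfree [[HmodM HminM] _] [[HmodN _] _] Hpref.
  set (K := fun a => M a /\ N a).
  assert (HmodK : is_model (reduct_St PS M) K).
  { intros g Hg Hbody.
    assert (Hneg := reduct_St_neg_nil PS M g Hg).
    assert (HM := HmodM g Hg (body_true_mono K M g Hneg (fun a Ka => proj1 Ka) Hbody)).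
    destruct (gr_head g) as [h|] eqn:Eh; [|exact HM].
    assert (HgN : reduct_St PS N g)
      by (apply (reduct_St_min_pref PS M N g Hfree Hpref Hg); congruence).
    assert (HN := HmodN g HgN (body_true_mono K N g Hneg (fun a Ka => proj2 Ka) Hbody)).
    rewrite Eh in HN. now split. }
  intros a Ma. exact (proj2 (HminM K HmodK (fun b Kb => proj1 Kb) a Ma)).
Qed.

Lemma min_pref_refl PS M : min_pref PS M M.
Proof. intros a Ma Hmp. now split. Qed.

Lemma min_pref_trans PS M N L :
  min_pref PS M N -> min_pref PS N L -> min_pref PS M L.
Proof.
  intros HMN HNL a Ma Hmp. exact (HNL a (proj1 (HMN a Ma Hmp)) Hmp).
Qed.

Lemma interp_ext (M N : interp) : (forall a, M a <-> N a) -> M = N.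
Proof.
  intros HMN. apply functional_extensionality. intros a.
  now apply propositional_extensionality.
Qed.

Theorem proposition3 (PS : p2p) :
  minimal_p2p_system PS -> LP_negation_free PS ->
  partial_order_on (weak_model PS) (min_pref PS).
Proof.
  intros _ Hfree. split; [|split].
  - intros M _. apply min_pref_refl.
  - intros M N L _ _ _. apply min_pref_trans.
  - intros M N HM HN HMN HNM. apply interp_ext. intros a. split.
    + exact (weak_model_min_pref_incl PS M N Hfree HM HN HMN a).
    + exact (weak_model_min_pref_incl PS N M Hfree HN HM HNM a).
Qed.
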